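(* Let $m,n,k$ be positive integers with $(m,k-1)=1$ and $n=\mathrm{ind}_m(k)$, let $G=G(m,n,k)=\langle a,b;\ a^m=1,\ b^n=1,\ b^{-1}ab=a^k\rangle$, and let $S\subseteq\mathbb{Z}_m$ be a base. Then \[ \Sigma_G(S)=\dot{\bigcup_{x\in S^*}}\Big(\bigcup_{y\in Y(x)} C(x,y)\Big), \] and the union over $x\in S^*$ is disjoint.
   Context: $\mathrm{ind}_m(k)$ is the least positive integer $d$ with $k^d\equiv 1\pmod m$. Every element of $G$ is written uniquely as $a^ib^j$ with $i\in\mathbb{Z}_m$, $j\in\mathbb{Z}_n$. For $t\ge 0$ let $k_t=k^t-1 \pmod m$. Maps are written on the right of their arguments, and the composition $\mu\circ\nu$ means ''first $\mu$, then $\nu$''. For $x,y\in\mathbb{Z}_m$ the mu-map $\mu(x,y):G\to G$ is defined by $(a^ib^j)\mu(x,y)=a^{N}$ with $N=xik^j-yk_j \pmod m$. The container is $C(x,y)=\{\mu(x,yz): z\in\mathbb{Z}_m\}$. For $S\subseteq\mathbb{Z}_m$, $I(S)$ denotes the elements of $S$ invertible in $\mathbb{Z}_m$, and $S^*$ is the multiplicative subsemigroup of $\mathbb{Z}_m$ generated by $S$. A base is a subset $S\subseteq\mathbb{Z}_m$ with $0\in S$ and $I(S)\neq\varnothing$. For a base $S$, $\Sigma_G(S)$ is the semigroup (under composition) of maps $G\to G$ generated by $\{\mu(s,z): s\in S,\ z\in\mathbb{Z}_m\}$. For $x\in S^*$, $Y(x)=\{s^*z:\ s^*\in S^*,\ z\in\mathbb{Z}_m,\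 \text{and there exists } s\in S \text{ with } x\equiv ss^*\pmod m\}$. *)

From mathcomp Require Import all_boot all_order all_algebra.
Set Implicit Arguments. Unset Strict Implicit. Unset Printing Implicit Defensive.

(* Elements of G(m,n,k) are the normal forms a^i b^j, i in Z_m, j in Z_n,
   represented as pairs (i, j) : 'I_m * 'I_n.  Z_m is represented by 'I_m
   (valid for every m >= 1, including m = 1). *)
Notation Gel m n := ('I_m * 'I_n)%type.

Lemma ord_pos (m : nat) (i : 'I_m) : 0 < m.
Proof. exact: leq_ltn_trans (leq0n i) (ltn_ord i). Qed.

(* the residue of N modulo m, as an element of 'I_m (i only witnesses m > 0) *)
Definition ordmod (m : nat) (i : 'I_m) (N : nat) : 'I_m :=
  Ordinal (ltn_pmod N (ord_pos i)).

Definition mulZ (m : nat) (x y : 'I_m) : 'I_m := ordmod x (x * y).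

Definition is_ind (m k n : nat) : Prop :=
  0 < n /\ k ^ n = 1 %[mod m] /\ (forall d, 0 < d -> d < n -> k ^ d <> 1 %[mod m]).

Notation Gmap m n := {ffun Gel m n -> Gel m n}.

(* the mu-map mu(x,y): a^i b^j |-> a^N, N = x i k^j - y k_j (mod m),
   k_j = k^j - 1 (mod m) *)
Definition mu (m n k : nat) (x y : 'I_m) : Gmap m n :=
  [ffun p : Gel m n =>
     let: (i, j) := p in
     (ordmod i (absz (((x * i * k ^ j)%:Z - (y * ((k ^ j - 1) %% m))%:Z) %% m)%Z),
      ordmod j 0)].

Definition compm (m n : nat) (f g : Gmap m n) : Gmap m n := [ffun p => g (f p)].

Definition container (m n k : nat) (x y : 'I_m) (f : Gmap m n) : Prop :=
  exists z : 'I_m, f = mu n k x (mulZ y z).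

Inductive Sstar (m : nat) (S : {set 'I_m}) : 'I_m -> Prop :=
| Sstar_gen s : s \in S -> @Sstar m S s
| Sstar_mul a b : @Sstar m S a -> @Sstar m S b -> @Sstar m S (mulZ a b).

Definition is_base (m : nat) (S : {set 'I_m}) : Prop :=
  (exists2 z, z \in S & val z = 0) /\ (exists2 u, u \in S & coprime u m).

Inductive Sigma (m n k : nat) (S : {set 'I_m}) : Gmap m n -> Prop :=
| Sigma_gen s z : s \in S -> @Sigma m n k S (mu n k s z)
| Sigma_comp f g : @Sigma m n k S f -> @Sigma m n k S g -> @Sigma m n k S (compm f g).

Definition Yset (m : nat) (S : {set 'I_m}) (x y : 'I_m) : Prop :=
  exists (st z s : 'I_m),
    [/\ Sstar S st, s \in S, x = mulZ s st & y = mulZ st z].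

Arguments container {m} n k x y f.

Definition block (m n k : nat) (S : {set 'I_m}) (x : 'I_m) (f : Gmap m n) : Prop :=
  exists2 y, Yset S x y & @container m n k x y f.

Arguments block {m} n k S x f.
Arguments Sigma {m} n k S _.

From mathcomp Require Import all_boot all_order all_algebra.
From mathcomp Require Import cyclic ring.
Import GRing.Theory Num.Theory.

(* Composing mu(x1,y1) then mu(x2,y2) gives mu(x2 x1, x2 y1): the first map
   lands in <a>, where mu(x2,y2) is multiplication of the exponent by x2
   because k_0 = 0.  Hence Sigma_G(S) consists of maps mu(x, y) with x in S^*,
   and composing generators keeps y of the shape required by Y(x).
   Conversely S contains a unit u, so 1 = u^phi(m) lies in S^*, and
   mu(s s^*, s^* z) is mu(s, z) followed by mu(s^*, 0), which is itself a
   composite of generators mu(s', 0).  The blocks are disjoint because x is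
   read off mu(x, y) from the image of a. *)

Lemma absz_modz (m : nat) (e : int) : 0 < m -> Posz (absz (e %% m)%Z) = (e %% m)%Z.
Proof. by move=> m_gt0; rewrite gez0_abs // modz_ge0 // -lt0n. Qed.

Lemma compm_mu (m n k : nat) (x1 y1 x2 y2 : 'I_m) :
  compm (mu n k x1 y1) (mu n k x2 y2) = mu n k (mulZ x2 x1) (mulZ x2 y1).
Proof.
have m_gt0 := ord_pos x1.
apply/ffunP => -[i j]; rewrite !ffunE /=.
congr pair; apply: val_inj => /=; last by rewrite mod0n.
rewrite mod0n expn0 subnn mod0n muln0 muln1 subr0.
congr (_ %% m)%N; apply/eqP; rewrite -eqz_nat !absz_modz //; apply/eqP.
rewrite !PoszM -!modz_nat absz_modz // modz_mod modzMmr.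
have modzE (a : int) : (a %% m)%Z = (a - (a %/ m)%Z * m)%R.
  by rewrite {2}(divz_eq a m); ring.
apply/eqP; rewrite eqz_mod_dvd (modzE (Posz (x2 * x1))) (modzE (Posz (x2 * y1))).
set c := ((k ^ j - 1)%N %% m)%Z; apply/dvdzP.
exists ((Posz (x2 * x1) %/ m)%Z * i * Posz (k ^ j) - (Posz (x2 * y1) %/ m)%Z * c)%R.
rewrite !PoszM; ring.
Qed.

Section MulZ.

Context {m : nat}.
Implicit Types a b c i : 'I_m.

Lemma mulZC a b : mulZ a b = mulZ b a.
Proof. by apply: val_inj => /=; rewrite mulnC. Qed.

Lemma mulZA a b c : mulZ a (mulZ b c) = mulZ (mulZ a b) c.
Proof. by apply: val_inj => /=; rewrite modnMmr modnMml mulnA. Qed.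

Lemma mulZ1 a i : mulZ a (ordmod i 1) = a.
Proof. by apply: val_inj => /=; rewrite modnMmr muln1 modn_small. Qed.

Lemma mulZ0 a i : mulZ a (ordmod i 0) = ordmod i 0.
Proof. by apply: val_inj => /=; rewrite mod0n muln0 mod0n. Qed.

End MulZ.

Lemma mu_injl (m n k : nat) (x y x' y' : 'I_m) :
  0 < n -> mu n k x y = mu n k x' y' -> x = x'.
Proof.
move=> n_gt0 /(congr1 (fun f : Gmap m n => val (f (ordmod x 1, Ordinal n_gt0)).1)).
rewrite !ffunE /= expn0 subnn mod0n !muln0 !subr0 !muln1 !modz_nat /=.
by rewrite !modnMmr !muln1 !modn_mod !modn_small //; apply: val_inj.
Qed.

Section Sstar.

Context {m : nat} {S : {set 'I_m}}.

Lemma Sstar_exp e {x} : Sstar S x -> Sstar S (ordmod x (x ^ e.+1)).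
Proof.
move=> Sx; elim: e => [|e IHe].
  by rewrite (_ : ordmod _ _ = x) //; apply: val_inj; rewrite /= expn1 modn_small.
rewrite (_ : ordmod _ _ = mulZ (ordmod x (x ^ e.+1)) x); first exact: Sstar_mul.
by apply: val_inj => /=; rewrite modnMml expnSr.
Qed.

Lemma Sstar_one {u} : u \in S -> coprime u m -> Sstar S (ordmod u 1).
Proof.
move=> uS u_unit; have m_gt0 := ord_pos u.
have := Sstar_exp (totient m).-1 (Sstar_gen uS).
by rewrite prednK ?totient_gt0 // (_ : ordmod _ _ = ordmod u 1) //;
  apply: val_inj => /=; apply: Euler_exp_totient.
Qed.

End Sstar.

Section Blocks.

Context {m n k : nat} {S : {set 'I_m}}.

Lemma Sigma_mu0 (i : 'I_m) {x} : Sstar S x -> Sigma n k S (mu n k x (ordmod i 0)).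
Proof.
elim=> [s sS | a b _ IHa _ IHb]; first exact: Sigma_gen.
by have := Sigma_comp IHb IHa; rewrite compm_mu mulZ0.
Qed.

Lemma Sigma_block {u} : u \in S -> coprime u m ->
  forall f, Sigma n k S f -> exists2 x, Sstar S x & block n k S x f.
Proof.
move=> uS /(Sstar_one uS) S1 f.
elim=> [s z sS | f1 f2 _ [x1 _ [y1 [st [z [s [Sst sS -> ->]]]] [w ->]]]
                 _ [x2 Sx2 [y2 _ [w2 ->]]]].
  exists s; first exact: Sstar_gen.
  exists (ordmod u 1); last by exists z; rewrite mulZC mulZ1.
  by exists (ordmod u 1), (ordmod u 1), s; rewrite !mulZ1.
rewrite compm_mu; exists (mulZ x2 (mulZ s st)).
  exact: Sstar_mul Sx2 (Sstar_mul (Sstar_gen sS) Sst).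
exists (mulZ x2 st); last by exists (mulZ z w); rewrite !mulZA.
exists (mulZ x2 st), (ordmod u 1), s; split; rewrite ?mulZ1 //; first exact: Sstar_mul.
by rewrite mulZA (mulZC x2 s) -mulZA.
Qed.

Lemma block_Sigma x f : block n k S x f -> Sigma n k S f.
Proof.
move=> [_ [st [z [s [Sst sS -> ->]]]] [w ->]].
have := Sigma_comp (Sigma_gen n k (mulZ z w) sS) (Sigma_mu0 s Sst).
by rewrite compm_mu (mulZC st s) mulZA.
Qed.

End Blocks.

Lemma block_injl (m n k : nat) (S : {set 'I_m}) (x x' : 'I_m) f :
  0 < n -> block n k S x f -> block n k S x' f -> x = x'.
Proof. by move=> n_gt0 [y _ [z ->]] [y' _ [z']]; apply: mu_injl. Qed.

Theorem theorem4p6 (m n k : nat) (S : {set 'I_m}) :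
  0 < m -> 0 < n -> 0 < k -> coprime m (k - 1) -> is_ind m k n ->
  is_base S ->
  (forall f : {ffun 'I_m * 'I_n -> 'I_m * 'I_n},
      Sigma n k S f <-> exists2 x, Sstar S x & block n k S x f) /\
  (forall (x x' : 'I_m) (f : {ffun 'I_m * 'I_n -> 'I_m * 'I_n}),
      Sstar S x -> Sstar S x' -> block n k S x f -> block n k S x' f -> x = x').
Proof.
move=> _ n_gt0 _ _ _ [_ [u uS u_unit]]; split.
- move=> f; split; first exact: Sigma_block uS u_unit f.
  by case=> x _; apply: block_Sigma.
- by move=> x x' f _ _; apply: block_injl.
Qed.
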